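(* Let $n > 1$ and let $M$ be a right $R$-module. Then the left $R$-module $M^+$ is $\mathrm{FP}_n$-flat if and only if $M$ is $\mathrm{FP}_n$-injective.
   Context: $R$ is an associative ring with unit. For $n \ge 0$, a (left or right) $R$-module is finitely $n$-presented if there is an exact sequence $F_n \to \cdots \to F_0 \to M \to 0$ with every $F_i$ finitely generated free; $\mathrm{FP}_n$ denotes the class of such modules (on the relevant side). A right (resp. left) $R$-module $N$ is $\mathrm{FP}_n$-injective if $\mathrm{Ext}^1_R(F,N)=0$ for every right (resp. left) $R$-module $F \in \mathrm{FP}_n$. A left $R$-module $M$ is $\mathrm{FP}_n$-flat if $\mathrm{Tor}_1^R(F,M)=0$ for every right $R$-module $F \in \mathrm{FP}_n$. The character module of a module $M$ is $M^+ = \mathrm{Hom}_{\mathbb Z}(M,\mathbb Q/\mathbb Z)$, a module on the opposite side. *)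

From HB Require Import structures.
From mathcomp Require Import all_boot all_order all_algebra.
Set Implicit Arguments. Unset Strict Implicit. Unset Printing Implicit Defensive.
Import Order.TTheory GRing.Theory Num.Theory.
Local Open Scope ring_scope.

(* The group Q/Z, represented by the half-open interval [0,1) of rat.  *)
Definition frac (x : rat) : rat := x - (Num.floor x)%:~R.

Lemma frac_ge0 x : 0 <= frac x.
Proof. by rewrite /frac subr_ge0 Num.Theory.floor_le. Qed.

Lemma frac_lt1 x : frac x < 1.
Proof. by rewrite /frac ltrBlDr addrC -[1]/(1%:~R) -rmorphD Num.Theory.floorD1_gt. Qed.

Definition QZ := {q : rat | (0 <= q) && (q < 1)}.

Definition qz_of (x : rat) : QZ :=
  exist _ (frac x) (introT andP (conj (frac_ge0 x) (frac_lt1 x))).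
Definition qz0 : QZ := qz_of 0.
Definition qz_add (a b : QZ) : QZ := qz_of (sval a + sval b).

Lemma fracDl x y : frac (frac x + y) = frac (x + y).
Proof.
have -> : frac x + y = (x + y) + (- Num.floor x)%:~R.
  by rewrite /frac rmorphN /= addrAC.
rewrite /frac floorDrz ?intr_int // intrKfloor rmorphD /= opprD addrA.
by rewrite rmorphN /= opprK addrAC subrK.
Qed.
Lemma qz_addC a b : qz_add a b = qz_add b a.
Proof. by apply: val_inj; rewrite /= addrC. Qed.

Lemma qz_addA a b c : qz_add a (qz_add b c) = qz_add (qz_add a b) c.
Proof.
by apply: val_inj => /=; rewrite [sval a + _]addrC !fracDl addrC addrA.
Qed.

Lemma qz_add00 : qz_add qz0 qz0 = qz0.
Proof. by apply: val_inj => /=; rewrite fracDl addrC fracDl. Qed.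

(* Modules.  A left S-module is an [lmodType S]; a right R-module is a  *)
(* left module over the converse ring [R^c] (m . r := r *: m).          *)

(* A finite free partial resolution of length n of a left S-module F:   *)
(*   F_n --A (n-1)--> ... --A 1--> F_1 --A 0--> F_0 --e--> F --> 0      *)
(* with F_i = S^(k i) (row vectors, S acting on the left), the map      *)
(* F_(i+1) -> F_i being v |-> v *m A i, e linear and onto, and the      *)
(* sequence exact at F, F_0, ..., F_(n-1).                              *)
Definition is_free_res (S : pzRingType) (F : lmodType S) (n : nat)
    (k : nat -> nat) (A : forall i, 'M[S]_(k i.+1, k i))
    (e : 'rV[S]_(k 0) -> F) : Prop :=
  [/\ forall (a : S) u v, e (a *: u + v) = a *: e u + e v,
      forall x : F, exists v, e v = x,
      (0 < n)%N -> forall v, e v = 0 <-> exists w, v = w *m A 0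
    & forall j, (j.+1 < n)%N ->
        forall v : 'rV[S]_(k j.+1), v *m A j = 0 <-> exists w, v = w *m A j.+1].

Definition FPn (S : pzRingType) (n : nat) (F : lmodType S) : Prop :=
  exists k A e, @is_free_res S F n k A e.

(* Ext^1_S(F, N) = 0, computed (as usual) from a finite free resolution *)
(* of F: H^1 of  Hom(F_0,N) -> Hom(F_1,N) -> Hom(F_2,N), where          *)
(* Hom(S^k, N) = N^k.  (Only used for F in FP_n with n >= 2, so such   *)
(* resolutions exist; we require the vanishing for every one of them.) *)
Definition ext1_zero (S : pzRingType) (F N : lmodType S) : Prop :=
  forall k A e, @is_free_res S F 2 k A e ->
  forall y : 'I_(k 1%N) -> N,
    (forall r : 'I_(k 2%N), \sum_(p < k 1%N) A 1%N r p *: y p = 0) ->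
    exists x : 'I_(k 0%N) -> N, forall p, y p = \sum_(q < k 0%N) A 0%N p q *: x q.

Definition FPn_injective (S : pzRingType) (n : nat) (N : lmodType S) : Prop :=
  forall F : lmodType S, FPn n F -> ext1_zero F N.

Record lpremod (R : Type) := LPreMod {
  lpm_car :> Type;
  lpm_zero : lpm_car;
  lpm_add : lpm_car -> lpm_car -> lpm_car;
  lpm_act : R -> lpm_car -> lpm_car }.
Arguments lpm_zero {R} l.
Arguments lpm_add {R} l.
Arguments lpm_act {R} l.

(* Tor_1^R(F, X) = 0 for a right R-module F and a left R-module X,      *)
(* computed from a finite free resolution of F: H_1 of                 *)
(*   F_2 (x) X -> F_1 (x) X -> F_0 (x) X,  with R^k (x)_R X = X^k.      *)
Definition tor1_zero (R : pzRingType) (F : lmodType R^c) (X : lpremod R) : Prop :=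
  forall k (A : forall i, 'M[R^c]_(k i.+1, k i)) e, @is_free_res R^c F 2 k A e ->
  forall z : 'I_(k 1%N) -> X,
    (forall q : 'I_(k 0%N),
        \big[lpm_add X/lpm_zero X]_(p < k 1%N) lpm_act X (A 0%N p q : R) (z p)
        = lpm_zero X) ->
    exists w : 'I_(k 2%N) -> X, forall p,
      z p = \big[lpm_add X/lpm_zero X]_(r < k 2%N) lpm_act X (A 1%N r p : R) (w r).

Definition FPn_flat (R : pzRingType) (n : nat) (X : lpremod R) : Prop :=
  forall F : lmodType R^c, FPn n F -> tor1_zero F X.

(* The character module M^+ = Hom_Z(M, Q/Z) of a right R-module M, a    *)
(* left R-module via (r f)(m) = f(m r).                                 *)
Definition qz_additive (M : zmodType) (f : M -> QZ) : Prop :=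
  forall a b, f (a + b) = qz_add (f a) (f b).

Definition charcar (M : zmodType) := {f : M -> QZ | qz_additive f}.

Definition char_zero (M : zmodType) : charcar M :=
  exist (@qz_additive M) (fun _ => qz0) (fun _ _ => esym qz_add00).

Lemma char_add_proof (M : zmodType) (f g : charcar M) :
  qz_additive (fun m => qz_add (sval f m) (sval g m)).
Proof.
case: f g => f hf [g hg] a b /=; rewrite hf hg.
rewrite -!qz_addA; congr qz_add; rewrite !qz_addA; congr qz_add.
exact: qz_addC.
Qed.

Definition char_add (M : zmodType) (f g : charcar M) : charcar M :=
  exist (@qz_additive M) _ (char_add_proof f g).

Lemma char_act_proof (R : pzRingType) (M : lmodType R^c) (r : R) (f : charcar M) :
  qz_additive (fun m : M => sval f ((r : R^c) *: m)).
Proof. by case: f => f hf a b /=; rewrite scalerDr hf. Qed.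

Definition char_act (R : pzRingType) (M : lmodType R^c) (r : R) (f : charcar M) :
  charcar M := exist (@qz_additive M) _ (char_act_proof r f).

Definition charmod (R : pzRingType) (M : lmodType R^c) : lpremod R :=
  @LPreMod R (charcar M) (char_zero M) (@char_add M) (@char_act R M).

From Pilot Require Import Defs.
From HB Require Import structures.
From mathcomp Require Import all_boot all_order all_algebra.
From mathcomp Require Import boolp classical_sets.
(* Q/Z is divisible, hence an injective abelian group: by Zorn's lemma every
   partial homomorphism into Q/Z extends to the whole group.  Consequently
   characters separate points from subgroups, and a homomorphism into Q/Z that
   kills the kernel of a map factors through it.  Applying Hom(-, Q/Z) to the
   complex M^k0 -> M^k1 -> M^k2 given by the first two matrices of a free
   resolution of F yields, through the pairing <z, A x> = <A^T z, x>, the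
   complex computing Tor_1(F, M^+).  A cocycle that is not a coboundary is
   separated from the coboundaries by a character, which is then a cycle that
   is no boundary; conversely a cycle kills the coboundaries, i.e. the kernel
   of the next map, so it factors through that map and is a boundary. *)

Set Implicit Arguments. Unset Strict Implicit. Unset Printing Implicit Defensive.
Import GRing.Theory Num.Theory.
Local Open Scope ring_scope.

Lemma additive_morph0 (U V : zmodType) (f : U -> V) : {morph f : a b / a + b} -> f 0 = 0.
Proof. by move=> fD; apply: (addIr (f 0)); rewrite -fD !add0r. Qed.

Lemma additive_morphB (U V : zmodType) (f : U -> V) :
  {morph f : a b / a + b} -> {morph f : a b / a - b}.
Proof.
by move=> fD a b; apply: (addIr (f b)); rewrite -fD !subrK.
Qed.

Lemma frac_id (x : rat) : 0 <= x < 1 -> Defs.frac x = x.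
Proof. by move=> x01; rewrite /Defs.frac (@Num.Theory.floor_def _ x 0) ?subr0 // add0r. Qed.

Lemma frac0 : Defs.frac 0 = 0.
Proof. exact: frac_id. Qed.

Lemma qz_of_val (a : QZ) : qz_of (sval a) = a.
Proof. by apply: val_inj; rewrite /= frac_id //; case: a. Qed.

Definition qz_opp (a : QZ) : QZ := qz_of (- sval a).

Lemma qz_add0 : left_id qz0 qz_add.
Proof. by move=> a; apply: val_inj; rewrite /= fracDl add0r frac_id //; case: a. Qed.

Lemma qz_addN : left_inverse qz0 qz_opp qz_add.
Proof. by move=> a; apply: val_inj; rewrite /= fracDl addNr. Qed.

HB.instance Definition _ := Choice.on QZ.
HB.instance Definition _ := GRing.isZmodule.Build QZ qz_addA qz_addC qz_add0 qz_addN.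

Lemma qz_ofD (x y : rat) : qz_of (x + y) = qz_of x + qz_of y.
Proof.
apply: val_inj; rewrite -[qz_of x + _]/(qz_add _ _) /=.
by rewrite fracDl [x + Defs.frac y]addrC fracDl addrC.
Qed.

Lemma qz_ofMn (x : rat) n : qz_of (x *+ n) = qz_of x *+ n.
Proof. by elim: n => [|n IHn]; rewrite ?mulr0n // !mulrS qz_ofD IHn. Qed.

Lemma qz_of_nat n : qz_of n%:R = 0.
Proof.
by apply: val_inj; rewrite /= /Defs.frac -[n%:R]/(n%:~R) intrKfloor subrr floor0 subr0.
Qed.

Lemma qz_of_eq0 (x : rat) : 0 <= x < 1 -> (qz_of x == 0) = (x == 0).
Proof. by move=> x01; rewrite -val_eqE /= frac_id // frac0. Qed.

Lemma qz_divisible (a : QZ) m : (0 < m)%N -> exists c : QZ, c *+ m = a.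
Proof.
move=> m_gt0; exists (qz_of (sval a / m%:R)).
by rewrite -qz_ofMn -[_ *+ m]mulr_natr divfK ?pnatr_eq0 -?lt0n // qz_of_val.
Qed.

Lemma qz_torsion m : m != 1%N -> exists2 c : QZ, c != 0 & c *+ m = 0.
Proof.
move=> m_neq1; have m2_gt1 : (1 < maxn m 2)%N by rewrite leq_max ltnSn orbT.
have inv01 : 0 <= ((maxn m 2)%:R^-1 : rat) < 1.
  by rewrite invr_ge0 ler0n invf_lt1 ?ltr0n ?ltr1n // (ltn_trans _ m2_gt1).
(* 1/m, or 1/2 when m = 0 *)
exists (qz_of (maxn m 2)%:R^-1).
  by rewrite qz_of_eq0 // invr_eq0 pnatr_eq0 -lt0n (ltn_trans _ m2_gt1).
case: m m_neq1 {m2_gt1 inv01} => [|m] // m_neq1; rewrite -qz_ofMn -[_ *+ m.+1]mulr_natr.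
have -> : maxn m.+1 2 = m.+1 by apply/maxn_idPl; rewrite ltn_neqAle eq_sym m_neq1.
by rewrite mulVf ?pnatr_eq0 // -[1]/(1%:R) qz_of_nat.
Qed.

Section Subgroup.
Variables (V : zmodType) (S : set V).

Definition is_subgroup := S 0 /\ forall a b, S a -> S b -> S (a - b).

Hypothesis subS : is_subgroup.

Lemma subgroup0 : S 0. Proof. by case: subS. Qed.

Lemma subgroupB a b : S a -> S b -> S (a - b).
Proof. by case: subS => _; apply. Qed.

Lemma subgroupN a : S a -> S (- a).
Proof. by rewrite -sub0r; apply: subgroupB subgroup0. Qed.

Lemma subgroupD a b : S a -> S b -> S (a + b).
Proof. by move=> Sa Sb; rewrite -[b]opprK; apply: subgroupB Sa (subgroupN Sb). Qed.

Lemma subgroupMn a n : S a -> S (a *+ n).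
Proof.
move=> Sa; elim: n => [|n IHn]; first by rewrite mulr0n; apply: subgroup0.
by rewrite mulrS; apply: subgroupD.
Qed.

Lemma subgroupMz a k : S a -> S (a *~ k).
Proof.
by move=> Sa; case: k => n; rewrite ?NegzE ?mulrNz; do ?apply: subgroupN; apply: subgroupMn.
Qed.

Lemma subgroup_multiples x :
  exists m : nat, forall k : int, S (x *~ k) <-> (m %| k)%Z.
Proof.
pose P n := (0 < n)%N && `[< S (x *+ n) >].
have [/ex_minnP[m /andP[m_gt0 /asboolP Sm] m_min]|none] := pselect (exists n, P n).
  exists m => k; split=> [Sk|/dvdzP[q ->]]; last first.
    by rewrite -mulrzA_C -pmulrn; apply: subgroupMz Sm.
  have Sr : S (x *~ (k %% m)%Z).
    have -> : (k %% m)%Z = k - (k %/ m)%Z * m.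
      by apply/eqP; rewrite eq_sym subr_eq addrC -divz_eq.
    by rewrite mulrzBr -mulrzA_C -pmulrn; apply: subgroupB Sk (subgroupMz _ Sm).
  have r_ge0 : (0 <= k %% m)%Z by rewrite modz_ge0 // eqz_nat -lt0n.
  apply/dvdz_mod0P; apply: contraTeq isT => r_neq0; have := m_min `|(k %% m)%Z|%N.
  rewrite /P absz_gt0 r_neq0 pmulrn gez0_abs // (asboolT Sr) => /(_ isT).
  by rewrite leqNgt -ltz_nat gez0_abs // ltz_pmod // ltz_nat.
exists 0%N => k; rewrite dvd0z; split=> [Sk|/eqP->]; last first.
  by rewrite mulr0z; apply: subgroup0.
suff Sabs : S (x *+ `|k|%N).
  apply: contrapT => /negP k_neq0; apply: none; exists `|k|%N.
  by rewrite /P absz_gt0 k_neq0 asboolT.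
by case: (intP k) Sk => // n; rewrite ?mulrNz ?abszN => // /subgroupN; rewrite opprK.
Qed.

End Subgroup.

Local Open Scope classical_set_scope.

Lemma subgroup_bigcup_chain (V : zmodType) (C : set (set V)) :
    C !=set0 -> total_on C subset -> (forall S, C S -> is_subgroup S) ->
  is_subgroup (\bigcup_(S in C) S).
Proof.
move=> [S0 CS0] Ctot Csub; split; first by exists S0 => //; case: (Csub _ CS0).
move=> a b [S CS Sa] [T CT Tb].
have [ST|TS] := Ctot _ _ CS CT.
  by exists T => //; apply: (subgroupB (Csub _ CT)) => //; apply: ST.
by exists S => //; apply: (subgroupB (Csub _ CS)) => //; apply: TS.
Qed.

Lemma subgroup_add_multiples (V : zmodType) (S : set V) v : is_subgroup S ->
  is_subgroup [set s + v *~ k | s in S & k in [set: int]].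
Proof.
move=> subS; split; first by exists 0; [exact: subgroup0 | exists 0; rewrite ?mulr0z ?addr0].
move=> _ _ [s Ss [k _ <-]] [t St [l _ <-]].
exists (s - t); first exact: subgroupB.
by exists (k - l) => //; rewrite mulrzBr opprD addrACA.
Qed.

Lemma pair_mulrz (U V : zmodType) (a : U) (b : V) k : (a, b) *~ k = (a *~ k, b *~ k).
Proof.
have pair_mulrn n : (a, b) *+ n = (a *+ n, b *+ n).
  by elim: n => [|n IHn]; rewrite ?mulr0n // !mulrS IHn.
by case: k => n; rewrite ?NegzE ?mulrNz -!pmulrn pair_mulrn.
Qed.

Section PartialHom.
Variable G : zmodType.
Implicit Types (Γ : set (G * QZ)) (x : G) (c : QZ).

(* A partial homomorphism G -> Q/Z is encoded by its graph, a subgroup of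
   G * Q/Z meeting 0 * Q/Z only in (0, 0): unions of chains of graphs are again
   graphs, which is what Zorn's lemma needs. *)
Definition single_valued Γ := forall c, Γ (0, c) -> c = 0.

Definition partial_hom Γ := is_subgroup Γ /\ single_valued Γ.

Definition compatible Γ x c := forall (k : int) d, Γ (x *~ k, d) -> d = c *~ k.

Lemma partial_hom_functional Γ a c d : partial_hom Γ -> Γ (a, c) -> Γ (a, d) -> c = d.
Proof.
move=> [subΓ svΓ] Γc Γd; apply/eqP; rewrite -subr_eq0; apply/eqP/svΓ.
by rewrite -(subrr a); exact: (subgroupB subΓ Γc Γd).
Qed.

Lemma compatible_exists Γ x : partial_hom Γ -> exists c, compatible Γ x c.
Proof.
move=> homΓ; have subD : is_subgroup [set a | exists c, Γ (a, c)].
  case: homΓ => subΓ _; split; first by exists 0; exact: (subgroup0 subΓ).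
  by move=> a b [c Γac] [d Γbd]; exists (c - d); exact: (subgroupB subΓ Γac Γbd).
have [[|m] multD] := subgroup_multiples subD x.
  exists 0 => k d Γkd; have /multD : exists e, Γ (x *~ k, e) by exists d.
  rewrite dvd0z => /eqP k0.
  by rewrite k0 mulr0z in Γkd *; apply: homΓ.2.
have [d0] := (multD m.+1).2 (dvdzz _); rewrite -pmulrn => Γmd0.
have [c cm] := qz_divisible d0 (ltn0Sn m); exists c => k d Γkd.
have /multD/dvdzP[q kq] : exists e, Γ (x *~ k, e) by exists d.
apply: (partial_hom_functional homΓ Γkd).
by rewrite kq -!mulrzA_C -!pmulrn cm -pair_mulrz; exact: (subgroupMz homΓ.1 q Γmd0).
Qed.

Lemma partial_hom_add_multiples Γ x c : partial_hom Γ -> compatible Γ x c ->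
  partial_hom [set γ + (x, c) *~ k | γ in Γ & k in [set: int]].
Proof.
move=> [subΓ svΓ] compat; split; first exact: subgroup_add_multiples.
move=> e [[a d] Γad [k _]]; rewrite pair_mulrz => -[ak dk].
have xk : x *~ k = - a by apply/eqP; rewrite -addr_eq0 addrC ak.
have Γk : Γ (x *~ k, - d) by rewrite xk; exact: (subgroupN subΓ Γad).
by rewrite -dk -(compat _ _ Γk) subrr.
Qed.

Lemma maximal_partial_hom Γ0 : partial_hom Γ0 ->
  exists Γ, [/\ partial_hom Γ, Γ0 `<=` Γ &
                forall Δ, partial_hom Δ -> Γ `<=` Δ -> Δ `<=` Γ].
Proof.
move=> homΓ0; pose T := {Γ | partial_hom Γ /\ Γ0 `<=` Γ}.
pose ext (s t : T) := `[< sval s `<=` sval t >].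
have [|||m m_max] := @ZL_preorder T (exist _ Γ0 (conj homΓ0 (@subset_refl _ _))) ext.
- by move=> t; apply/asboolP.
- by move=> r s t /asboolP rs /asboolP st; apply/asboolP; apply: subset_trans rs st.
- move=> A Atot; pose C := [set Γ0] `|` [set sval t | t in A].
  have Csub Γ : C Γ -> partial_hom Γ /\ Γ0 `<=` Γ.
    by rewrite /C => -[->|[t _ <-]]; [split=> // γ | exact: (svalP t)].
  have Ctot : total_on C subset.
    move=> _ _ [->|[s As <-]] [->|[t At <-]].
    - by left.
    - by left; case: (svalP t).
    - by right; case: (svalP s).
    - by case: (Atot _ _ As At) => /asboolP; [left | right].
  have homU : partial_hom (\bigcup_(Γ in C) Γ).
    split; last by move=> c [Γ /Csub[[_ svΓ] _]]; apply: svΓ.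
    apply: subgroup_bigcup_chain Ctot _; first by exists Γ0; left.
    by move=> Γ /Csub[[]].
  have sub0U : Γ0 `<=` \bigcup_(Γ in C) Γ by move=> γ Γ0γ; exists Γ0 => //; left.
  exists (exist _ (\bigcup_(Γ in C) Γ) (conj homU sub0U)) => t At; apply/asboolP => γ tγ.
  by exists (sval t) => //; right; exists t.
case: m m_max => Γ [homΓ sub0] /= m_max; exists Γ; split=> // Δ homΔ ΓΔ.
have ΓΔ' : ext (exist _ Γ (conj homΓ sub0)) (exist _ Δ (conj homΔ (subset_trans sub0 ΓΔ))).
  exact/asboolP.
by move/asboolP: (m_max _ ΓΔ').
Qed.

Lemma partial_hom_total_extension Γ0 : partial_hom Γ0 ->
  exists g : G -> QZ, {morph g : a b / a + b} /\ forall a c, Γ0 (a, c) -> g a = c.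
Proof.
move=> /maximal_partial_hom[Γ [homΓ sub0 Γmax]].
have total a : exists c, Γ (a, c).
  apply: contrapT => noc; have [c compat] := compatible_exists a homΓ.
  have ΓΔ : Γ `<=` [set γ + (a, c) *~ k | γ in Γ & k in [set: int]].
    by move=> γ Γγ; exists γ => //; exists 0; rewrite ?mulr0z ?addr0.
  apply: noc; exists c; apply: Γmax (partial_hom_add_multiples homΓ compat) ΓΔ _ _.
  by exists 0; [exact: (subgroup0 homΓ.1) | exists 1; rewrite ?add0r].
have [g Γg] := choice total; exists g; split=> [a b | a c /sub0 Γac].
  exact: (partial_hom_functional homΓ (Γg _) (subgroupD homΓ.1 (Γg a) (Γg b))).
exact: (partial_hom_functional homΓ (Γg _) Γac).
Qed.

End PartialHom.

Lemma separating_character (G : zmodType) (S : set G) y : is_subgroup S -> ~ S y ->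
  exists g : G -> QZ, [/\ {morph g : a b / a + b}, forall a, S a -> g a = 0 & g y != 0].
Proof.
move=> subS Sy; pose Γ0 := [set u : G * QZ | S u.1 /\ u.2 = 0].
have homΓ0 : partial_hom Γ0.
  split; last by move=> c [].
  split; first by split=> //; exact: subgroup0.
  by move=> [a c] [b d] [Sa /= ->] [Sb /= ->]; split; [exact: subgroupB | rewrite /= subrr].
have [m multS] := subgroup_multiples subS y.
have m_neq1 : m != 1%N by apply: contra_notN Sy => /eqP m1; rewrite -[y]mulr1z multS m1.
have [c c_neq0 cm] := qz_torsion m_neq1.
have compat : compatible Γ0 y c.
  by move=> k d [/multS/dvdzP[q ->] /= ->]; rewrite -mulrzA_C -pmulrn cm mul0rz.
have [g [gD gΓ]] := partial_hom_total_extension (partial_hom_add_multiples homΓ0 compat).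
exists g; split=> // [a Sa|].
  by apply: gΓ; exists (a, 0) => //; exists 0; rewrite ?mulr0z ?addr0.
rewrite (gΓ y c) //; exists (0, 0); first by split=> //; exact: subgroup0.
by exists 1; rewrite ?add0r.
Qed.

Lemma factor_character (U V : zmodType) (phi : U -> V) (z : U -> QZ) :
    {morph phi : a b / a + b} -> {morph z : a b / a + b} ->
    (forall a, phi a = 0 -> z a = 0) ->
  exists g : V -> QZ, {morph g : a b / a + b} /\ forall a, g (phi a) = z a.
Proof.
move=> phiD zD ker_phi_z; have [phiB zB] := (additive_morphB phiD, additive_morphB zD).
pose Γ0 := range (fun a => (phi a, z a)).
have homΓ0 : partial_hom Γ0.
  split; last by move=> c [a _ [/ker_phi_z ->]].
  split; first by exists 0 => //; rewrite (additive_morph0 phiD) (additive_morph0 zD).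
  by move=> _ _ [a _ <-] [b _ <-]; exists (a - b); rewrite // phiB zB.
have [g [gD gΓ]] := partial_hom_total_extension homΓ0.
by exists g; split=> // a; apply: gΓ; exists a.
Qed.

Lemma charcar_eq (M : zmodType) (f g : charcar M) : sval f =1 sval g -> f = g.
Proof.
by case: f g => f fD [g gD] /= /funext fg; subst g; congr exist; exact: Prop_irrelevance.
Qed.

Lemma charcar0 (M : zmodType) (f : charcar M) : sval f 0 = 0.
Proof. exact: additive_morph0 (svalP f). Qed.

Lemma charcar_sum (M : zmodType) (f : charcar M) I (r : seq I) (P : pred I) (v : I -> M) :
  sval f (\sum_(i <- r | P i) v i) = \sum_(i <- r | P i) sval f (v i).
Proof. exact: (big_morph _ (svalP f) (charcar0 f)). Qed.

Lemma sval_big_char_add (M : zmodType) I (r : seq I) (P : pred I) (F : I -> charcar M) m :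
  sval (\big[@char_add M/char_zero M]_(i <- r | P i) F i) m =
  \sum_(i <- r | P i) sval (F i) m.
Proof. exact: (big_morph (fun f : charcar M => sval f m)). Qed.

Definition delta_ffun (V : zmodType) k (i : 'I_k) (m : V) : {ffun 'I_k -> V} :=
  [ffun j => if j == i then m else 0].

Lemma delta_ffunD (V : zmodType) k (i : 'I_k) (a b : V) :
  delta_ffun i (a + b) = delta_ffun i a + delta_ffun i b.
Proof. by apply/ffunP => j; rewrite !ffunE; case: (j == i); rewrite ?addr0. Qed.

Lemma sum_delta_ffun (V : zmodType) k (y : {ffun 'I_k -> V}) : \sum_i delta_ffun i (y i) = y.
Proof.
apply/ffunP => i; rewrite sum_ffunE (bigD1 i) //= ffunE eqxx big1 ?addr0 // => j ji.
by rewrite ffunE eq_sym (negbTE ji).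
Qed.

Section CharacterDuality.
Variables (R : pzRingType) (M : lmodType R^c).

Definition mx_act m n (A : 'M[R^c]_(m, n)) (x : 'I_n -> M) : {ffun 'I_m -> M} :=
  [ffun i => \sum_j A i j *: x j].

Definition mx_coact m n (A : 'M[R^c]_(m, n)) (z : 'I_m -> charcar M) (j : 'I_n) :
  charcar M := \big[@char_add M/char_zero M]_(i < m) char_act (A i j : R) (z i).

Definition char_pair k (z : 'I_k -> charcar M) (y : 'I_k -> M) : QZ :=
  \sum_i sval (z i) (y i).

Lemma mx_actD m n (A : 'M[R^c]_(m, n)) :
  {morph (fun x : {ffun 'I_n -> M} => mx_act A x) : x y / x + y}.
Proof.
move=> x y; apply/ffunP => i; rewrite !ffunE -big_split; apply: eq_bigr => j _.
by rewrite ffunE scalerDr.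
Qed.

Lemma char_pairD k (z : 'I_k -> charcar M) :
  {morph (fun y : {ffun 'I_k -> M} => char_pair z y) : x y / x + y}.
Proof.
by move=> x y; rewrite /char_pair -big_split; apply: eq_bigr => i _; rewrite ffunE (svalP (z i)).
Qed.

Lemma char_pair_mx_act m n (A : 'M[R^c]_(m, n)) z x :
  char_pair z (mx_act A x) = char_pair (mx_coact A z) x.
Proof.
rewrite /char_pair; under eq_bigr => i _ do rewrite ffunE charcar_sum.
by rewrite exchange_big; apply: eq_bigr => j _; rewrite sval_big_char_add.
Qed.

Lemma char_pair_delta k (z : 'I_k -> charcar M) i m :
  char_pair z (delta_ffun i m) = sval (z i) m.
Proof.
rewrite /char_pair (bigD1 i) //= ffunE eqxx big1 ?addr0 // => j ji.
by rewrite ffunE (negbTE ji) charcar0.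
Qed.

Section Components.
Variables (k : nat) (g : {ffun 'I_k -> M} -> QZ) (gD : {morph g : a b / a + b}).

Lemma component_additive (i : 'I_k) : qz_additive (fun m : M => g (delta_ffun i m)).
Proof. by move=> a b; rewrite delta_ffunD gD. Qed.

Definition char_component (i : 'I_k) : charcar M := exist _ _ (component_additive i).

Lemma char_pair_component (y : {ffun 'I_k -> M}) : char_pair char_component y = g y.
Proof.
by rewrite -[in RHS](sum_delta_ffun y) (big_morph g gD (additive_morph0 gD)).
Qed.

End Components.

Variables (k0 k1 k2 : nat) (B : 'M[R^c]_(k1, k0)) (C : 'M[R^c]_(k2, k1)).

Definition ext_exact := forall y : 'I_k1 -> M, (forall r, \sum_p C r p *: y p = 0) ->
  exists x : 'I_k0 -> M, forall p, y p = \sum_q B p q *: x q.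

Definition tor_exact := forall z : 'I_k1 -> charcar M,
  (forall q, mx_coact B z q = char_zero M) ->
  exists w : 'I_k2 -> charcar M, forall p, z p = mx_coact C w p.

Lemma tor_exact_ext_exact : tor_exact -> ext_exact.
Proof.
move=> torBC y cocycle; apply: contrapT => not_coboundary.
pose Y : {ffun 'I_k1 -> M} := [ffun p => y p].
pose image_B := range (fun x : {ffun 'I_k0 -> M} => mx_act B x).
have sub_image : is_subgroup image_B.
  split; first by exists 0 => //=; rewrite (additive_morph0 (mx_actD B)).
  by move=> _ _ [x _ <-] [x' _ <-]; exists (x - x'); rewrite //= (additive_morphB (mx_actD B)).
have Y_image : ~ image_B Y.
  move=> [x _ /ffunP xY]; apply: not_coboundary; exists x => p.
  by have := xY p; rewrite !ffunE.
have [Z [ZD Z_image ZY]] := separating_character sub_image Y_image.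
have cycle q : mx_coact B (char_component ZD) q = char_zero M.
  apply: charcar_eq => m; rewrite -(char_pair_delta (mx_coact B _)) -char_pair_mx_act.
  by rewrite char_pair_component Z_image //; exists (delta_ffun q m).
have [w wC] := torBC _ cycle.
have CY : mx_act C Y = 0.
  apply/ffunP => r; rewrite !ffunE -[RHS](cocycle r).
  by apply: eq_bigr => p _; rewrite ffunE.
move/eqP: ZY; apply; rewrite -(char_pair_component ZD) (funext wC).
by rewrite -char_pair_mx_act CY (additive_morph0 (char_pairD w)).
Qed.

Lemma ext_exact_tor_exact : ext_exact -> tor_exact.
Proof.
move=> extBC z cycle.
have ker_C (y : {ffun 'I_k1 -> M}) : mx_act C y = 0 -> char_pair z y = 0.
  move/ffunP=> Cy; have [r|x yB] := extBC y.
    by have := Cy r; rewrite !ffunE.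
  have -> : y = mx_act B x by apply/ffunP => p; rewrite ffunE yB.
  by rewrite char_pair_mx_act (funext cycle); apply: big1.
have [g [gD g_C]] := factor_character (mx_actD C) (char_pairD z) ker_C.
exists (char_component gD) => p; apply: charcar_eq => m.
rewrite -(char_pair_delta (mx_coact C _)) -char_pair_mx_act char_pair_component.
by rewrite g_C char_pair_delta.
Qed.

End CharacterDuality.

Lemma ext1_zero_iff_tor1_zero_charmod (R : pzRingType) (F M : lmodType R^c) :
  ext1_zero F M <-> tor1_zero F (charmod M).
Proof.
split=> vanish k A e res; [apply: ext_exact_tor_exact | apply: tor_exact_ext_exact];
  exact: vanish res.
Qed.

Theorem proposition3p6 (R : pzRingType) (n : nat) (M : lmodType R^c) :
  (1 < n)%N -> (FPn_flat n (charmod M) <-> FPn_injective n M).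
Proof. by move=> _; split=> vanish F /vanish /ext1_zero_iff_tor1_zero_charmod. Qed.
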